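(* Let $a,b,k$ be integers with $4k^2 < a < b-k$. Let $G$ be a graph obtained from the complete bipartite graph $K_{a,b}$ by removing the edges of $k$ forests (each a subgraph of $K_{a,b}$). Then $G$ contains a matching of size $a-k$. *)

From mathcomp Require Import all_boot.
Set Implicit Arguments. Unset Strict Implicit. Unset Printing Implicit Defensive.

(* A bipartite graph between parts 'I_a and 'I_b is given by its edge set
   E : {set 'I_a * 'I_b} (a subgraph of K_{a,b}). *)

Definition badj (a b : nat) (E : {set 'I_a * 'I_b}) : rel ('I_a + 'I_b) :=
  fun u v =>
    match u, v with
    | inl i, inr j => (i, j) \in E
    | inr j, inl i => (i, j) \in E
    | _, _ => false
    end.

Definition is_forest (a b : nat) (E : {set 'I_a * 'I_b}) : Prop :=
  forall s : seq ('I_a + 'I_b), uniq s -> 2 < size s -> ~~ cycle (badj E) s.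

Definition is_matching (a b : nat) (M : {set 'I_a * 'I_b}) : Prop :=
  forall e1 e2, e1 \in M -> e2 \in M ->
    (e1.1 = e2.1 -> e1 = e2) /\ (e1.2 = e2.2 -> e1 = e2).

Definition remove_forests (a b k : nat) (F : 'I_k -> {set 'I_a * 'I_b})
  : {set 'I_a * 'I_b} :=
  [set e | [forall i, e \notin F i]].

(* Sort the left vertices by their degree in G and discard the k of smallest
   degree; the j-th remaining vertex then has more than j neighbours, so a
   greedy choice matches all a - k of them.  The degree claim is a counting
   argument: a forest spans at most as many edges as it has vertices, so the
   k forests remove at most k (l + b) edges at any l left vertices, which is
   too few to push k + c + 1 of them down to degree c. *)
From mathcomp Require Import all_boot zify.
Set Implicit Arguments. Unset Strict Implicit. Unset Printing Implicit Defensive.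

Definition has_cycle (T : eqType) (e : rel T) :=
  exists s, [/\ uniq s, 2 < size s & cycle e s].

Section MinDegreeCycle.
Variables (T : finType) (e : rel T).
Hypotheses (e_sym : symmetric e) (e_irr : irreflexive e).

Lemma cycle_of_chord x y q w :
  path e x (y :: q) -> uniq (x :: y :: q) -> w \in q -> e x w ->
  has_cycle e.
Proof.
move=> p_xyq u_xyq wq exw; move: p_xyq u_xyq; case/splitPr: wq => q1 q2 p_xyq u_xyq.
exists (x :: y :: rcons q1 w); split.
- by move: u_xyq; rewrite -cat_rcons -!cat_cons cat_uniq => /andP[].
- by rewrite /= size_rcons.
- rewrite /cycle -rcons_cons rcons_path last_rcons e_sym exw andbT.
  by move: p_xyq; rewrite -cat_rcons -cat_cons cat_path => /andP[].
Qed.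

Variable V : {set T}.
Hypothesis V_deg2 : forall v, v \in V ->
  exists w1 w2, [/\ w1 \in V, w2 \in V, w1 != w2, e v w1 & e v w2].

(* A path that cannot be extended backwards closes into a cycle; the fuel n
   bounds the number of extensions, since a path has at most #|T| vertices. *)
Lemma path_extends_to_cycle n x q :
  #|T| <= n + size q -> x \in V -> path e x q -> uniq (x :: q) ->
  has_cycle e.
Proof.
elim: n x q => [|n IH] x q le_T xV p_xq u_xq.
  by have := max_card (mem (x :: q)); rewrite (card_uniqP u_xq) ltnNge le_T.
have [w1 [w2 [w1V w2V w12 e1 e2]]] := V_deg2 xV.
have extend w : w \in V -> e x w -> w \notin x :: q ->
    has_cycle e.
  move=> wV exw wq; apply: (IH w (x :: q)) => /=; first by rewrite addnS -addSn.
  - by [].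
  - by rewrite e_sym exw.
  - by rewrite wq.
have [w1q|] := boolP (w1 \in x :: q); last exact: extend.
have [w2q|] := boolP (w2 \in x :: q); last exact: extend.
clear extend; case: q le_T p_xq u_xq w1q w2q => [|y q] _ p_xq u_xq w1q w2q.
  by move: w1q e1; rewrite mem_seq1 => /eqP->; rewrite e_irr.
have in_tail w : e x w -> w != y -> w \in x :: y :: q -> w \in q.
  move=> exw wy; rewrite !in_cons (negPf wy) /= => /orP[/eqP wx|//].
  by move: exw; rewrite wx e_irr.
have [w [wq exw]] : exists w, w \in q /\ e x w.
  case: (eqVneq w1 y) => [w1y|w1y]; last by exists w1; rewrite in_tail.
  by exists w2; rewrite in_tail // -w1y eq_sym.
exact: (cycle_of_chord p_xq u_xq wq).
Qed.

Lemma mindeg2_cycle : V != set0 -> has_cycle e.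
Proof.
case/set0Pn => x xV.
by apply: (@path_extends_to_cycle #|T| x [::]); rewrite ?addn0.
Qed.

End MinDegreeCycle.

Section ForestEdges.
Variables (a b : nat) (E : {set 'I_a * 'I_b}).
Local Notation vertex := ('I_a + 'I_b)%type.

Lemma badj_sym : symmetric (badj E).
Proof. by case=> [x|y] [x'|y']. Qed.

Lemma badj_irr : irreflexive (badj E).
Proof. by case. Qed.

Definition induced_edges (V : {set vertex}) :=
  [set e in E | (inl e.1 \in V) && (inr e.2 \in V)].

Definition incident (v : vertex) (e : 'I_a * 'I_b) := (inl e.1 == v) || (inr e.2 == v).

Lemma card_incident_le1 (V : {set vertex}) v :
  {in V &, forall w1 w2, badj E v w1 -> badj E v w2 -> w1 = w2} ->
  #|[set e in induced_edges V | incident v e]| <= 1.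
Proof.
move=> nbr1; apply/card_le1_eqP => -[x1 y1] [x2 y2].
rewrite !inE /incident /= => /andP[/and3P[E1 x1V y1V] v1] /andP[/and3P[E2 x2V y2V] v2].
case: v nbr1 v1 v2 => [x|y] nbr1.
- move=> /orP[/eqP[x1x]|/eqP//] /orP[/eqP[x2x]|/eqP//]; subst x1 x2.
  by have [->] := nbr1 _ _ y1V y2V E1 E2.
- move=> /= /eqP[y1y] /eqP[y2y]; subst y1 y2.
  by have [->] := nbr1 _ _ x1V x2V E1 E2.
Qed.

Lemma induced_edges_delete (V : {set vertex}) v :
  induced_edges V \subset induced_edges (V :\ v) :|: [set e in induced_edges V | incident v e].
Proof.
apply/subsetP => -[x y]; rewrite !inE /incident /= => /and3P[-> xV yV].
by rewrite xV yV /=; case: eqP; case: eqP.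
Qed.

Lemma forest_card_induced_edges (V : {set vertex}) : is_forest E -> #|induced_edges V| <= #|V|.
Proof.
move=> forestE; have [n] := ubnP #|V|; elim: n V => // n IH V /ltnSE leVn.
have [/exists_inP[v vV /forall_inP leaf] | /exists_inPn deg2] := boolP
  [exists v in V, [forall w1 in V, forall w2 in V,
     badj E v w1 && badj E v w2 ==> (w1 == w2)]].
- have le1 : #|[set e in induced_edges V | incident v e]| <= 1.
    apply: card_incident_le1 => w1 w2 w1V w2V e1 e2.
    by apply/eqP; move/forall_inP: (leaf _ w1V) => /(_ _ w2V); rewrite e1 e2.
  have ltV : #|V :\ v| < #|V| by rewrite (cardsD1 v V) vV.
  apply: leq_trans (subset_leq_card (induced_edges_delete V v)) _.
  apply: leq_trans (leq_card_setU _ _) _.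
  by have := IH (V :\ v) (leq_trans ltV leVn); lia.
- have [->|V0] := eqVneq V set0.
    by rewrite cards0 leqn0 cards_eq0; apply/eqP/setP => e; rewrite !inE !andbF.
  have [|s [us ss cs]] := mindeg2_cycle badj_sym badj_irr _ V0; last first.
    by have := forestE s us ss; rewrite cs.
  move=> v vV; have /forall_inPn[w1 w1V /forall_inPn[w2 w2V]] := deg2 v vV.
  by rewrite negb_imply => /andP[/andP[e1 e2] w12]; exists w1, w2.
Qed.

Lemma forest_card_left_edges (L : {set 'I_a}) :
  is_forest E -> #|[set e in E | e.1 \in L]| <= #|L| + b.
Proof.
move=> forestE; pose V := inl @: L :|: inr @: [set: 'I_b].
have sub : [set e in E | e.1 \in L] \subset induced_edges V.
  apply/subsetP => -[x y]; rewrite !inE /= => /andP[-> xL].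
  by rewrite imset_f // imset_f ?orbT ?inE.
apply: leq_trans (subset_leq_card sub) _.
apply: leq_trans (forest_card_induced_edges V forestE) _.
apply: leq_trans (leq_card_setU _ _) _.
apply: leq_add; first exact: leq_imset_card.
by apply: leq_trans (leq_imset_card _ _) _; rewrite cardsT card_ord.
Qed.

End ForestEdges.

Lemma leq_card_bigcup (I T : finType) (X : I -> {set T}) :
  #|\bigcup_i X i| <= \sum_i #|X i|.
Proof.
elim/big_rec2: _ => [|i A n _ IH]; first by rewrite cards0.
by apply: leq_trans (leq_card_setU _ _) _; rewrite leq_add2l.
Qed.

Lemma card_sum_fibers (A B : finType) (P : {set A * B}) :
  #|P| = \sum_x #|[set y | (x, y) \in P]|.
Proof.
have card_sum (T : finType) (C : {set T}) : #|C| = \sum_t (t \in C : nat).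
  by rewrite -sum1_card big_mkcond; apply: eq_bigr => t _; case: (t \in C).
under eq_bigr do rewrite card_sum.
by rewrite pair_bigA card_sum; apply: eq_bigr => -[x y] _; rewrite inE.
Qed.

Definition ldeg (a b : nat) (G : {set 'I_a * 'I_b}) (x : 'I_a) :=
  #|[set y | (x, y) \in G]|.

Lemma removed_edges_ineq k a b c l :
  k ^ 2 < a -> a + k < b -> c + k < a -> k + c < l ->
  k * (l + b) < l * (b - c).
Proof.
move=> ka ab ca cl.
have : (k + c + 1) * (b - c - k) <= l * (b - c - k) by apply: leq_mul => //; lia.
nia.
Qed.

Section FewLowDegree.
Variables (a b k : nat) (F : 'I_k -> {set 'I_a * 'I_b}).
Hypotheses (forestF : forall i, is_forest (F i)).
Local Notation G := (remove_forests F).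

Lemma card_removed_left_edges (L : {set 'I_a}) :
  #|[set e | (e.1 \in L) && (e \notin G)]| <= k * (#|L| + b).
Proof.
have sub : [set e | (e.1 \in L) && (e \notin G)] \subset
           \bigcup_i [set e in F i | e.1 \in L].
  apply/subsetP => e; rewrite !inE negb_forall => /andP[eL /existsP[i]].
  by rewrite negbK => eFi; apply/bigcupP; exists i; rewrite ?inE ?eFi.
apply: leq_trans (subset_leq_card sub) _; apply: leq_trans (leq_card_bigcup _) _.
apply: (@leq_trans (\sum_(i < k) (#|L| + b))); last by rewrite sum_nat_const card_ord.
by apply: leq_sum => i _; apply: forest_card_left_edges.
Qed.

Hypotheses (ka : k ^ 2 < a) (ab : a + k < b).

Lemma few_low_degree c : c + k < a -> #|[set x | ldeg G x <= c]| <= k + c.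
Proof.
move=> ca; set L := [set x | _]; rewrite leqNgt; apply/negP => cL.
have removed_ge : #|L| * (b - c) <= #|[set e | (e.1 \in L) && (e \notin G)]|.
  rewrite card_sum_fibers -sum1_card big_distrl big_mkcond /=.
  apply: leq_sum => x _; case: ifP => // xL; rewrite mul1n.
  have xc : ldeg G x <= c by move: xL; rewrite inE.
  have -> : [set y | (x, y) \in [set e | (e.1 \in L) && (e \notin G)]] =
            ~: [set y | (x, y) \in G] by apply/setP => y; rewrite !inE /= xc.
  apply: leq_trans (leq_sub2l b xc) _.
  by rewrite -[b in b - _](card_ord b) -(cardsC [set y | (x, y) \in G]) addKn.
have := leq_trans removed_ge (card_removed_left_edges L).
by rewrite leqNgt (removed_edges_ineq ka ab ca cL).
Qed.

End FewLowDegree.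

Section GreedyMatching.
Variables (a b : nat) (G : {set 'I_a * 'I_b}).

Lemma is_matching_setU1 (M : {set 'I_a * 'I_b}) x y :
  is_matching M -> (forall e, e \in M -> e.1 != x) -> (forall e, e \in M -> e.2 != y) ->
  is_matching ((x, y) |: M).
Proof.
move=> Mm Mx My e1 e2; rewrite !inE => /predU1P[->|e1M] /predU1P[->|e2M] //.
- by split=> eq; [move: (Mx _ e2M) | move: (My _ e2M)]; rewrite -eq eqxx.
- by split=> eq; [move: (Mx _ e1M) | move: (My _ e1M)]; rewrite eq eqxx.
- exact: Mm.
Qed.

Lemma greedy_matching (s : seq 'I_a) :
  uniq s -> (forall x, x \in s -> index x s < ldeg G x) ->
  exists M : {set 'I_a * 'I_b},
    [/\ M \subset G, is_matching M, #|M| = size s & forall e, e \in M -> e.1 \in s].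
Proof.
elim/last_ind: s => [|s x IH].
  move=> _ _; exists set0; rewrite sub0set cards0; split=> // [e1 e2|e]; by rewrite inE.
rewrite rcons_uniq => /andP[xs us] deg_s.
have [M [MG Mm Mc Ms] {IH}] : exists M : {set 'I_a * 'I_b},
    [/\ M \subset G, is_matching M, #|M| = size s & forall e, e \in M -> e.1 \in s].
  apply: IH => // z zs; have := deg_s z; rewrite mem_rcons in_cons zs orbT.
  by rewrite -cats1 index_cat zs => /(_ isT).
have deg_x : size s < ldeg G x.
  have := deg_s x; rewrite mem_rcons mem_head.
  by rewrite -cats1 index_cat (negPf xs) /= eqxx addn0 => /(_ isT).
have /subsetPn[y] : ~~ ([set y | (x, y) \in G] \subset [set e.2 | e in M]).
  apply/negP => /subset_leq_card le_deg.
  by have := leq_trans le_deg (leq_imset_card _ M); rewrite -/(ldeg G x) Mc; lia.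
rewrite inE => xyG yM.
exists ((x, y) |: M); split.
- by rewrite subUset sub1set xyG.
- apply: is_matching_setU1 => // e eM.
  + by apply: contraNneq xs => <-; apply: Ms.
  + by apply: contraNneq yM => <-; apply: imset_f.
- by rewrite cardsU1 size_rcons Mc; case: (boolP (_ \in M)) => // /Ms; rewrite (negPf xs).
- by move=> e; rewrite !inE mem_rcons in_cons => /predU1P[->|/Ms->]; rewrite ?eqxx ?orbT.
Qed.

End GreedyMatching.

Lemma sorted_nth_gt (T : finType) (f : T -> nat) (t : seq T) x0 n j :
  sorted (relpre f leq) t -> uniq t -> n < size t ->
  #|[set z | f z <= j]| <= n -> j < f (nth x0 t n).
Proof.
move=> st ut nt le_n; rewrite ltnNge; apply/negP => fj.
have sub : take n.+1 t \subset [set z | f z <= j].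
  apply/subsetP => z /(nthP x0)[i]; rewrite size_takel // => ltin <-.
  rewrite inE nth_take //; apply: leq_trans fj.
  have lt_it : i < size t := leq_trans ltin nt.
  rewrite -!(nth_map x0 0) //.
  by apply: (sorted_leq_nth leq_trans leqnn); rewrite ?sorted_map ?inE ?size_map.
have := subset_leq_card sub; rewrite (card_uniqP (take_uniq _ ut)) size_takel //.
by move=> /leq_trans/(_ le_n); rewrite ltnn.
Qed.

Theorem claim10 (a b k : nat) (F : 'I_k -> {set 'I_a * 'I_b}) :
  4 * k ^ 2 < a -> a + k < b ->
  (forall i, is_forest (F i)) ->
  exists M : {set 'I_a * 'I_b},
    [/\ M \subset remove_forests F, is_matching M & #|M| = a - k].
Proof.
move=> ka ab forestF; set G := remove_forests F.
pose t := sort (relpre (ldeg G) leq) (enum 'I_a).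
have t_sorted : sorted (relpre (ldeg G) leq) t.
  by apply: sort_sorted => x y; apply: leq_total.
have t_uniq : uniq t by rewrite sort_uniq enum_uniq.
have t_size : size t = a by rewrite size_sort size_enum_ord.
have deg_s x : x \in drop k t -> index x (drop k t) < ldeg G x.
  move=> xs; have := index_mem x (drop k t); rewrite xs size_drop t_size => js.
  rewrite -{2}(nth_index x xs) nth_drop.
  apply: sorted_nth_gt => //; first by rewrite t_size; lia.
  by apply: few_low_degree => //; [exact: leq_ltn_trans (leq_pmull _ _) ka | lia].
have [M [MG Mm Mc _]] := greedy_matching (drop_uniq k t_uniq) deg_s.
by exists M; rewrite Mc size_drop t_size.
Qed.
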